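(* For every $\to$-formula $H$, $\mathbf{CL7}\vdash H$ if and only if $H$ is a substitutional instance of a binary tautology of classical propositional logic.
   Context: Formulas (''$\to$-formulas'') are built from infinitely many propositional atoms using only the binary connective $\to$. A $\to$-sequent is a pair $\Gamma\Rightarrow F$ where $\Gamma$ is a finite multiset of $\to$-formulas and $F$ is a $\to$-formula. The system $\mathbf{CL7}$ has as axioms all sequents of the form $\Gamma, F\Rightarrow F$ and exactly two inference rules: Right $\to$: from $\Gamma,E\Rightarrow F$ infer $\Gamma\Rightarrow E\to F$; Left $\to$: from $\Gamma,F\Rightarrow G$ and $\Delta\Rightarrow E$ infer $\Gamma,\Delta,E\to F\Rightarrow G$. (There is no contraction rule; this is the implicative fragment of affine logic.) A formula $H$ is provable in $\mathbf{CL7}$ iff the sequent $\Rightarrow H$ (empty antecedent) is derivable. A formula of classical propositional logic is binary if no atom occurs in it more than twice; a tautology is a classically valid formula. A substitutional instance of $F$ is the result of replacing atoms of $F$ by arbitrary formulas, with all occurrences of the same atom replaced by the same formula. *)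

From Stdlib Require Import List Permutation Bool Arith.
Import ListNotations.

Inductive form : Type :=
| Var : nat -> form
| Imp : form -> form -> form.

(* Multisets of formulas are represented by lists up to Permutation. *)
Inductive CL7 : list form -> form -> Prop :=
| CL7_ax : forall (G G' : list form) (F : form),
    Permutation G' (F :: G) -> CL7 G' F
| CL7_R : forall (G : list form) (E F : form),
    CL7 (E :: G) F -> CL7 G (Imp E F)
| CL7_L : forall (G D S : list form) (E F H : form),
    CL7 (F :: G) H -> CL7 D E ->
    Permutation S (Imp E F :: G ++ D) -> CL7 S H.

Definition provable (H : form) : Prop := CL7 [] H.

Fixpoint eval (v : nat -> bool) (F : form) : bool :=
  match F with
  | Var n => v n
  | Imp A B => implb (eval v A) (eval v B)
  end.

Definition tautology (F : form) : Prop := forall v : nat -> bool, eval v F = true.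

Fixpoint occ (n : nat) (F : form) : nat :=
  match F with
  | Var m => if Nat.eqb n m then 1 else 0
  | Imp A B => occ n A + occ n B
  end.

Definition binary (F : form) : Prop := forall n : nat, occ n F <= 2.

Fixpoint subst (s : nat -> form) (F : form) : form :=
  match F with
  | Var n => s n
  | Imp A B => Imp (subst s A) (subst s B)
  end.

From Stdlib Require Import List Permutation Bool Arith Lia Wellfounded.
Import ListNotations.

(* Both directions go through sequents.  Call a sequent G => H binary if every
   atom occurs at most twice in it, and valid if it is classically valid.

   Soundness: every CL7-derivable sequent is a substitution instance of a
   binary valid sequent.  By induction on the derivation; the two premises
   of the left rule are glued by renaming their atoms apart (even atoms for
   one premise, odd atoms for the other), and an axiom F, G => F is an
   instance of a linear sequent F0, G0 => F0.

   Completeness: every binary valid sequent is derivable, by induction on its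
   size.  For an
   atom p on the right, validity forces an antecedent formula with head p; if
   it is B -> R, binarity lets the remaining antecedent split into D and Rr so
   that D => B and R, Rr => p are again valid (each counter-model lifts to a
   counter-model of the whole sequent), and the left rule applies.  Finally
   CL7 is closed under substitution. *)

Fixpoint occL (n : nat) (l : list form) : nat :=
  match l with [] => 0 | A :: l' => occ n A + occL n l' end.

Definition binary_seq (G : list form) (H : form) : Prop :=
  forall n, occL n G + occ n H <= 2.

Definition valid_seq (G : list form) (H : form) : Prop :=
  forall v, (forall A, In A G -> eval v A = true) -> eval v H = true.

(* G => H is a substitution instance of a binary valid sequent; this is the
   invariant of CL7-derivability established by soundness. *)
Definition bv_instance (G : list form) (H : form) : Prop :=
  exists G0 H0 s, binary_seq G0 H0 /\ valid_seq G0 H0 /\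
                  map (subst s) G0 = G /\ subst s H0 = H.

Lemma occL_app n l1 l2 : occL n (l1 ++ l2) = occL n l1 + occL n l2.
Proof. induction l1; simpl; lia. Qed.

Lemma occL_perm n l1 l2 : Permutation l1 l2 -> occL n l1 = occL n l2.
Proof. induction 1; simpl; lia. Qed.

Lemma occ_in n A l : In A l -> occ n A <= occL n l.
Proof.
  induction l as [|B l IH]; simpl; [tauto|]. intros [<-|HA]; [|specialize (IH HA)]; lia.
Qed.

Lemma binary_seq_perm G G' H : Permutation G G' -> binary_seq G H -> binary_seq G' H.
Proof. intros HP Hb n. rewrite <- (occL_perm n _ _ HP). apply Hb. Qed.

Lemma valid_seq_perm G G' H : Permutation G G' -> valid_seq G H -> valid_seq G' H.
Proof.
  intros HP Hv v HG. apply Hv. intros A HA. apply HG.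
  exact (Permutation_in _ HP HA).
Qed.

Lemma bv_instance_perm G G' H : Permutation G G' -> bv_instance G H -> bv_instance G' H.
Proof.
  intros HP (G0 & H0 & s & Hb & Hv & <- & HH).
  apply Permutation_sym, Permutation_map_inv in HP as (G1 & -> & HP).
  exists G1, H0, s. split; [|split]; eauto using binary_seq_perm, valid_seq_perm.
Qed.

Definition ren (r : nat -> nat) (F : form) : form := subst (fun n => Var (r n)) F.

Lemma subst_ext s t F : (forall n, s n = t n) -> subst s F = subst t F.
Proof. intro H; induction F; simpl; congruence. Qed.

Lemma subst_ren s r F : subst s (ren r F) = subst (fun n => s (r n)) F.
Proof. unfold ren; induction F; simpl; congruence. Qed.

Lemma eval_ren v r F : eval v (ren r F) = eval (fun n => v (r n)) F.
Proof. unfold ren; induction F; simpl; congruence. Qed.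

Lemma occ_ren_hit r k F :
  (forall a b, r a = r b -> a = b) -> occ (r k) (ren r F) = occ k F.
Proof.
  intro Hr; unfold ren; induction F as [n|]; simpl; [|lia].
  destruct (Nat.eqb_spec (r k) (r n)), (Nat.eqb_spec k n); subst; auto.
  - exfalso; auto.
  - congruence.
Qed.

Lemma occ_ren_miss r m F : (forall k, r k <> m) -> occ m (ren r F) = 0.
Proof.
  intro Hr; unfold ren; induction F as [n|]; simpl; [|lia].
  destruct (Nat.eqb_spec m (r n)); [exfalso; eapply Hr; eauto|reflexivity].
Qed.

Lemma occL_map m k (f : form -> form) l :
  (forall F, occ m (f F) = occ k F) -> occL m (map f l) = occL k l.
Proof. intro Hf; induction l; simpl; [|rewrite Hf]; lia. Qed.

Lemma occL_map_zero m (f : form -> form) l :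
  (forall F, occ m (f F) = 0) -> occL m (map f l) = 0.
Proof. intro Hf; induction l; simpl; [|rewrite Hf]; lia. Qed.

(* Renaming into even and odd atoms separates two sequents; join merges two
   substitutions acting on the even and the odd atoms respectively. *)
Definition ev (n : nat) : nat := 2 * n.
Definition od (n : nat) : nat := S (2 * n).

Definition join (s1 s2 : nat -> form) (n : nat) : form :=
  if Nat.even n then s1 (Nat.div2 n) else s2 (Nat.div2 n).

Lemma join_ev s1 s2 k : join s1 s2 (ev k) = s1 k.
Proof. unfold join, ev. rewrite Nat.even_mul, Nat.div2_double. reflexivity. Qed.

Lemma join_od s1 s2 k : join s1 s2 (od k) = s2 k.
Proof.
  unfold join, od. rewrite Nat.even_succ, Nat.odd_mul, Nat.div2_succ_double. reflexivity.
Qed.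

Lemma subst_join_ev s1 s2 F : subst (join s1 s2) (ren ev F) = subst s1 F.
Proof. rewrite subst_ren. apply subst_ext. intro; apply join_ev. Qed.

Lemma subst_join_od s1 s2 F : subst (join s1 s2) (ren od F) = subst s2 F.
Proof. rewrite subst_ren. apply subst_ext. intro; apply join_od. Qed.

Lemma map_subst_join_ev s1 s2 l :
  map (subst (join s1 s2)) (map (ren ev) l) = map (subst s1) l.
Proof. rewrite map_map. apply map_ext, subst_join_ev. Qed.

Lemma map_subst_join_od s1 s2 l :
  map (subst (join s1 s2)) (map (ren od) l) = map (subst s2) l.
Proof. rewrite map_map. apply map_ext, subst_join_od. Qed.

Lemma ren_parity m : exists k,
  ((forall F, occ m (ren ev F) = occ k F) /\ (forall F, occ m (ren od F) = 0)) \/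
  ((forall F, occ m (ren ev F) = 0) /\ (forall F, occ m (ren od F) = occ k F)).
Proof.
  destruct (Nat.Even_or_Odd m) as [[k ->]|[k ->]]; exists k; [left|right]; split; intro F.
  - apply (occ_ren_hit ev); unfold ev; lia.
  - apply occ_ren_miss; unfold od; lia.
  - apply occ_ren_miss; unfold ev; lia.
  - replace (2 * k + 1) with (od k) by (unfold od; lia). apply (occ_ren_hit od); unfold od; lia.
Qed.

Lemma linearize_form F : exists F0 s, (forall n, occ n F0 <= 1) /\ subst s F0 = F.
Proof.
  induction F as [n|A (A0 & sA & HA & <-) B (B0 & sB & HB & <-)].
  - exists (Var 0), (fun _ => Var n). split; [|reflexivity].
    intro m; simpl; destruct (Nat.eqb m 0); lia.
  - exists (Imp (ren ev A0) (ren od B0)), (join sA sB). split.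
    + intro m. destruct (ren_parity m) as (k & [[Hev Hod]|[Hev Hod]]);
        simpl; rewrite Hev, Hod; [specialize (HA k)|specialize (HB k)]; lia.
    + simpl. rewrite subst_join_ev, subst_join_od. reflexivity.
Qed.

Lemma linearize_list l : exists l0 s, (forall n, occL n l0 <= 1) /\ map (subst s) l0 = l.
Proof.
  induction l as [|F l (l0 & sl & Hl & <-)].
  - exists [], (fun _ => Var 0). split; [intro; simpl; lia|reflexivity].
  - destruct (linearize_form F) as (F0 & sF & HF & <-).
    exists (ren ev F0 :: map (ren od) l0), (join sF sl). split.
    + intro m. destruct (ren_parity m) as (k & [[Hev Hod]|[Hev Hod]]); simpl;
        rewrite Hev; [rewrite (occL_map_zero _ _ _ Hod)|rewrite (occL_map _ _ _ _ Hod)];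
        [specialize (HF k)|specialize (Hl k)]; lia.
    + simpl. rewrite subst_join_ev, map_subst_join_od. reflexivity.
Qed.

Lemma bv_instance_axiom F G : bv_instance (F :: G) F.
Proof.
  destruct (linearize_list (F :: G)) as ([|F0 G0] & s & Hlin & Hs); [discriminate|].
  injection Hs as HF HG. exists (F0 :: G0), F0, s. repeat split; auto.
  - intro n. specialize (Hlin n). simpl in *. lia.
  - intros v Hv. apply Hv. left; reflexivity.
  - simpl. congruence.
Qed.

Lemma bv_instance_right E F G : bv_instance (E :: G) F -> bv_instance G (Imp E F).
Proof.
  intros ([|E0 G0] & F0 & s & Hb & Hv & Hs & HF); [discriminate|].
  injection Hs as HE HG. exists G0, (Imp E0 F0), s. repeat split; auto.
  - intro n. specialize (Hb n). simpl in *. lia.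
  - intros v HG0. simpl. destruct (eval v E0) eqn:HE0; [|reflexivity].
    apply Hv. intros A [<-|HA]; auto.
  - simpl. congruence.
Qed.

Lemma bv_instance_left E F G D H :
  bv_instance (F :: G) H -> bv_instance D E -> bv_instance (Imp E F :: G ++ D) H.
Proof.
  intros ([|F1 G1] & H1 & s1 & Hb1 & Hv1 & Hs1 & HH1) (D2 & E2 & s2 & Hb2 & Hv2 & HD2 & HE2);
    [discriminate|].
  injection Hs1 as HF1 HG1.
  exists (Imp (ren od E2) (ren ev F1) :: map (ren ev) G1 ++ map (ren od) D2), (ren ev H1),
    (join s1 s2). repeat split.
  - intro m.
    destruct (ren_parity m) as (k & [[Hev Hod]|[Hev Hod]]); simpl in *; rewrite occL_app;
      rewrite ?Hev, ?Hod, ?(occL_map _ _ _ _ Hev), ?(occL_map _ _ _ _ Hod),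
        ?(occL_map_zero _ _ _ Hev), ?(occL_map_zero _ _ _ Hod);
      [specialize (Hb1 k)|specialize (Hb2 k)]; simpl in *; lia.
  - intros v Hv. rewrite eval_ren. apply Hv1.
    assert (HE : eval v (ren od E2) = true).
    { rewrite eval_ren. apply Hv2. intros A HA. rewrite <- eval_ren. apply Hv.
      right. apply in_or_app. right. apply in_map, HA. }
    intros A [<-|HA].
    + rewrite <- eval_ren. specialize (Hv _ (or_introl eq_refl)).
      simpl in Hv. rewrite HE in Hv. exact Hv.
    + rewrite <- eval_ren. apply Hv. right. apply in_or_app. left. apply in_map, HA.
  - simpl. rewrite map_app, subst_join_od, subst_join_ev, map_subst_join_ev,
      map_subst_join_od. congruence.
  - rewrite subst_join_ev. exact HH1.
Qed.

Theorem soundness G H : CL7 G H -> bv_instance G H.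
Proof.
  induction 1 as [G G' F HP | G E F _ IH | G D S E F H _ IH1 _ IH2 HP].
  - apply (bv_instance_perm (F :: G)); [apply Permutation_sym, HP|apply bv_instance_axiom].
  - apply bv_instance_right, IH.
  - apply (bv_instance_perm (Imp E F :: G ++ D)); [apply Permutation_sym, HP|].
    apply bv_instance_left; assumption.
Qed.

Fixpoint head (F : form) : nat :=
  match F with Var n => n | Imp _ B => head B end.

Fixpoint size (F : form) : nat :=
  match F with Var _ => 1 | Imp A B => S (size A + size B) end.

Fixpoint sizeL (l : list form) : nat :=
  match l with [] => 0 | A :: l' => size A + sizeL l' end.

Lemma size_pos F : 1 <= size F.
Proof. destruct F; simpl; lia. Qed.

Lemma sizeL_app l1 l2 : sizeL (l1 ++ l2) = sizeL l1 + sizeL l2.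
Proof. induction l1; simpl; lia. Qed.

Lemma sizeL_perm l1 l2 : Permutation l1 l2 -> sizeL l1 = sizeL l2.
Proof. induction 1; simpl; lia. Qed.

Lemma occ_head F : 1 <= occ (head F) F.
Proof. induction F; simpl; [rewrite Nat.eqb_refl|]; lia. Qed.

Lemma eval_head v F : v (head F) = true -> eval v F = true.
Proof. induction F; simpl; intro H; [exact H|]. rewrite IHF2, implb_true_r; auto. Qed.

Lemma eval_agree v w F : (forall n, 0 < occ n F -> v n = w n) -> eval v F = eval w F.
Proof.
  induction F as [n|A IHA B IHB]; simpl; intro H.
  - apply H. rewrite Nat.eqb_refl. lia.
  - rewrite IHA, IHB; auto; intros n Hn; apply H; lia.
Qed.

(* The valuation equal to v on the atoms of S and to w elsewhere; used to
   lift counter-models of a premise to the whole sequent. *)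
Definition patch (S : list form) (v w : nat -> bool) (n : nat) : bool :=
  if Nat.eqb (occL n S) 0 then w n else v n.

Lemma eval_patch_inside S v w X :
  (forall n, 0 < occ n X -> 0 < occL n S) -> eval (patch S v w) X = eval v X.
Proof.
  intro HX. apply eval_agree. intros n Hn. unfold patch.
  specialize (HX n Hn). destruct (Nat.eqb_spec (occL n S) 0); [lia|reflexivity].
Qed.

Lemma patch_outside S v w n : occL n S = 0 -> patch S v w n = w n.
Proof. unfold patch. intros ->. reflexivity. Qed.

(* D and R separate the context for the targets T1 (beside D) and T2 (beside
   R): heads of D avoid R and T2, heads of R avoid D and T1. *)
Definition separated (D R T1 T2 : list form) : Prop :=
  (forall X, In X D -> occL (head X) (R ++ T2) = 0) /\
  (forall X, In X R -> occL (head X) (D ++ T1) = 0).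

Lemma separated_sym D R T1 T2 : separated D R T1 T2 -> separated R D T2 T1.
Proof. unfold separated; tauto. Qed.

Lemma separated_perm D D' R R' T1 T2 : Permutation D D' -> Permutation R R' ->
  separated D R T1 T2 -> separated D' R' T1 T2.
Proof.
  intros HD HR [H1 H2]. split; intros X HX.
  - rewrite <- (occL_perm _ _ _ (Permutation_app_tail T2 HR)).
    apply H1, (Permutation_in _ (Permutation_sym HD) HX).
  - rewrite <- (occL_perm _ _ _ (Permutation_app_tail T1 HD)).
    apply H2, (Permutation_in _ (Permutation_sym HR) HX).
Qed.

Lemma separated_cons G D R T1 T2 : separated D R (G :: T1) T2 ->
  occL (head G) (R ++ T2) = 0 -> separated (G :: D) R T1 T2.
Proof.
  intros [H1 H2] HG. split.
  - intros X [<-|HX]; auto.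
  - intros X HX. specialize (H2 _ HX). rewrite occL_app in *. simpl in *. lia.
Qed.

(* G -> G' stands for G and G' kept on the same side: splitting it keeps
   separation, provided the head of G avoids the other side. *)
Lemma separated_unmerge G G' D R T1 T2 : separated (Imp G G' :: D) R T1 T2 ->
  occL (head G) (R ++ T2) = 0 -> separated (G :: G' :: D) R T1 T2.
Proof.
  intros [H1 H2] HG. split.
  - intros X [<-|[<-|HX]]; auto.
    + apply (H1 (Imp G G')). left; reflexivity.
    + apply H1. right; exact HX.
  - intros X HX. specialize (H2 _ HX). rewrite occL_app in *. simpl in *. lia.
Qed.

Definition separable (l T1 T2 : list form) : Prop :=
  exists D R, Permutation l (D ++ R) /\ separated D R T1 T2.

Lemma separable_swap l T1 T2 : separable l T2 T1 -> separable l T1 T2.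
Proof.
  intros (D & R & HP & HS). exists R, D. split.
  - rewrite HP. apply Permutation_app_comm.
  - apply separated_sym, HS.
Qed.

Lemma occL_split n l : 0 < occL n l -> exists X G Y, l = X ++ G :: Y /\ 0 < occ n G.
Proof.
  induction l as [|A l IH]; simpl; [lia|]. intro H.
  destruct (Nat.eq_dec (occ n A) 0).
  - destruct IH as (X & G & Y & -> & HG); [lia|]. exists (A :: X), G, Y; auto.
  - exists [], A, l. split; [reflexivity|lia].
Qed.

Lemma perm_extract (K : form) (X Y D R : list form) :
  Permutation (X ++ K :: Y) (D ++ R) -> In K D ->
  exists D', Permutation D (K :: D') /\ Permutation (X ++ Y) (D' ++ R).
Proof.
  intros HP HK. apply in_split in HK as (D1 & D2 & ->). exists (D1 ++ D2). split.
  - apply Permutation_sym, Permutation_middle.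
  - rewrite <- app_assoc. apply (Permutation_app_inv _ _ _ _ K).
    rewrite <- app_assoc in HP. exact HP.
Qed.

Lemma separable_fresh G l T1 T2 : occL (head G) (l ++ T2) = 0 ->
  separable l (G :: T1) T2 -> separable (G :: l) T1 T2.
Proof.
  intros Hh (D & R & HP & HS). exists (G :: D), R. split.
  - apply perm_skip, HP.
  - apply separated_cons; [exact HS|].
    rewrite occL_app in Hh. rewrite occL_app, (occL_perm _ _ _ HP), occL_app in *. lia.
Qed.

Lemma separable_unmerge G G' X Y D R T1 T2 : occL (head G) (X ++ Y ++ T2) = 0 ->
  Permutation (X ++ Imp G G' :: Y) (D ++ R) -> separated D R T1 T2 ->
  In (Imp G G') D -> separable (G :: X ++ G' :: Y) T1 T2.
Proof.
  intros Hh HP HS HK.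
  destruct (perm_extract _ _ _ _ _ HP HK) as (D' & HD & HXY).
  exists (G :: G' :: D'), R. split.
  - apply perm_skip. rewrite <- Permutation_middle. apply perm_skip, HXY.
  - apply separated_unmerge; [apply (separated_perm D _ R); auto|].
    pose proof (occ_in (head G) _ _ HK). pose proof (occL_perm (head G) _ _ HP).
    rewrite !occL_app in *. simpl in *. lia.
Qed.

(* If every occurrence of the head of G lies in G or G', it suffices to
   separate the shorter list where G and G' are fused into G -> G'. *)
Lemma separable_merge G G' X Y T1 T2 : occL (head G) (X ++ Y ++ T1 ++ T2) = 0 ->
  separable (X ++ Imp G G' :: Y) T1 T2 -> separable (G :: X ++ G' :: Y) T1 T2.
Proof.
  intros Hh (D & R & HP & HS). rewrite !occL_app in Hh.
  assert (HK : In (Imp G G') (D ++ R)).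
  { apply (Permutation_in _ HP), in_or_app. right; left; reflexivity. }
  apply in_app_or in HK as [HK|HK].
  - apply (separable_unmerge _ _ _ _ D R); auto. rewrite !occL_app. lia.
  - apply separable_swap, (separable_unmerge _ _ _ _ R D); auto using separated_sym.
    + rewrite !occL_app. lia.
    + rewrite HP. apply Permutation_app_comm.
Qed.

(* Partition lemma: in a binary configuration the context is separable.  The
   head of each formula occurs at most once elsewhere, so formulas linked
   through their heads never connect T1 with T2. *)
Lemma partition l : forall T1 T2,
  (forall n, occL n l + occL n T1 + occL n T2 <= 2) -> separable l T1 T2.
Proof.
  induction l as [l IH] using (well_founded_induction
    (wf_inverse_image _ nat _ (@length form) lt_wf)).
  destruct l as [|G l]; intros T1 T2 Hb.
  { exists [], []. split; [constructor|split; simpl; tauto]. }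
  pose proof (occ_head G) as HhG. assert (Hbh := Hb (head G)). simpl in Hbh.
  destruct (Nat.eq_dec (occL (head G) l) 0) as [Hl|Hl].
  - (* the head of G occurs nowhere else in l: put G on a side avoiding its head *)
    assert (Hside : forall U1 U2, occL (head G) U2 = 0 ->
      (forall n, occ n G + occL n l + occL n U1 + occL n U2 <= 2) ->
      separable (G :: l) U1 U2).
    { intros U1 U2 HU Hb'. apply separable_fresh.
      - rewrite occL_app. lia.
      - apply IH; [simpl; lia|]. intro n. specialize (Hb' n). simpl. lia. }
    destruct (Nat.eq_dec (occL (head G) T2) 0) as [HT|HT].
    + apply Hside; [exact HT|]. intro n. specialize (Hb n). simpl in Hb. lia.
    + apply separable_swap, Hside; [lia|]. intro n. specialize (Hb n). simpl in Hb. lia.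
  - (* the head of G also occurs in some G' of l: keep G and G' together *)
    destruct (occL_split (head G) l) as (X & G' & Y & -> & HG'); [lia|].
    apply separable_merge.
    + rewrite occL_app in Hbh. rewrite !occL_app. simpl in Hbh. lia.
    + apply IH.
      * simpl. rewrite !length_app. simpl. lia.
      * intro n. specialize (Hb n). simpl in *. rewrite !occL_app in *. simpl in *. lia.
Qed.

(* A valid sequent with an atom p on the right has an antecedent with head p:
   otherwise "everything except p is true" is a counter-model. *)
Lemma valid_atom_head G p : valid_seq G (Var p) -> exists C, In C G /\ head C = p.
Proof.
  intro Hv. destruct (existsb (fun C => Nat.eqb (head C) p) G) eqn:E.
  - apply existsb_exists in E as (C & HC & Hh). exists C. split; [exact HC|].
    apply Nat.eqb_eq, Hh.
  - exfalso. assert (Hp := Hv (fun n => negb (Nat.eqb n p))). simpl in Hp.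
    rewrite Nat.eqb_refl in Hp. discriminate Hp. intros A HA. apply eval_head.
    destruct (Nat.eqb_spec (head A) p) as [Hh|]; [|reflexivity].
    rewrite <- not_true_iff_false, existsb_exists in E. exfalso. apply E.
    exists A. split; [exact HA|]. apply Nat.eqb_eq, Hh.
Qed.

(* First premise of the left rule: a counter-model of R, Rr => p, made true
   outside the atoms of Rr, R, p, refutes the whole sequent. *)
Lemma left_premise_valid B R D Rr p :
  separated D Rr [B] [R; Var p] ->
  valid_seq (Imp B R :: D ++ Rr) (Var p) -> valid_seq (R :: Rr) (Var p).
Proof.
  intros [HD _] Hv v HvR.
  set (S := Rr ++ [R; Var p]).
  assert (Hin : forall X, In X (R :: Var p :: Rr) -> eval (patch S v (fun _ => true)) X = eval v X).
  { intros X HX. apply eval_patch_inside. intros n Hn.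
    assert (HXS : In X S) by (apply in_or_app; simpl in HX |- *; tauto).
    pose proof (occ_in n _ _ HXS). lia. }
  rewrite <- (Hin (Var p)) by (right; left; reflexivity). apply Hv.
  intros A [<-|HA]; [|apply in_app_or in HA as [HA|HA]].
  - simpl. rewrite (Hin R), (HvR R), implb_true_r by (left; reflexivity). reflexivity.
  - apply eval_head. rewrite patch_outside by exact (HD A HA). reflexivity.
  - rewrite Hin by (right; right; exact HA). apply HvR. right; exact HA.
Qed.

(* Second premise: a counter-model of D => B, extended by "all atoms but p
   true" outside D, B, refutes the whole sequent; binarity keeps p and the
   heads of Rr outside D, B. *)
Lemma right_premise_valid B R D Rr p : head R = p ->
  binary_seq (Imp B R :: D ++ Rr) (Var p) -> separated D Rr [B] [R; Var p] ->
  valid_seq (Imp B R :: D ++ Rr) (Var p) -> valid_seq D B.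
Proof.
  intros HR Hb [_ HRr] Hv v HvD.
  destruct (eval v B) eqn:EB; [reflexivity|exfalso].
  set (S := D ++ [B]). set (w := fun n => negb (Nat.eqb n p)).
  assert (Hp := Hb p). pose proof (occ_head R) as HRp. rewrite HR in HRp.
  simpl in Hp. rewrite Nat.eqb_refl, occL_app in Hp.
  assert (HpS : occL p S = 0) by (unfold S; rewrite occL_app; simpl; lia).
  assert (Hin : forall X, In X (B :: D) -> eval (patch S v w) X = eval v X).
  { intros X HX. apply eval_patch_inside. intros n Hn.
    assert (HXS : In X S) by (apply in_or_app; simpl in HX |- *; tauto).
    pose proof (occ_in n _ _ HXS). lia. }
  assert (Hcontra := Hv (patch S v w)). simpl in Hcontra.
  rewrite patch_outside in Hcontra by exact HpS.
  assert (Hwp : w p = false) by (unfold w; rewrite Nat.eqb_refl; reflexivity).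
  rewrite Hwp in Hcontra. discriminate Hcontra.
  intros A [<-|HA]; [|apply in_app_or in HA as [HA|HA]].
  - simpl. rewrite (Hin B), EB by (left; reflexivity). reflexivity.
  - rewrite Hin by (right; exact HA). apply HvD, HA.
  - apply eval_head. rewrite patch_outside by exact (HRr A HA). unfold w.
    destruct (Nat.eqb_spec (head A) p) as [Hh|]; [|reflexivity].
    pose proof (occ_in p _ _ HA). pose proof (occ_head A). rewrite Hh in *. lia.
Qed.

Lemma completeness_bounded n : forall G H, sizeL G + size H <= n ->
  binary_seq G H -> valid_seq G H -> CL7 G H.
Proof.
  induction n as [|n IH]; intros G H Hs Hb Hv; [pose proof (size_pos H); lia|].
  destruct H as [p|A B].
  2:{ apply CL7_R, IH.
      - simpl in *. lia.
      - intro m. specialize (Hb m). simpl in *. lia.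
      - intros v HvA. specialize (Hv v). simpl in Hv.
        rewrite (HvA A (or_introl eq_refl)) in Hv. apply Hv.
        intros A' HA'. apply HvA. right; exact HA'. }
  destruct (valid_atom_head _ _ Hv) as (C & HC & Hh).
  apply in_split in HC as (G1 & G2 & ->).
  assert (HPG := Permutation_sym (Permutation_middle G1 G2 C)).
  destruct C as [q|B R]; simpl in Hh.
  { subst q. apply CL7_ax with (G := G1 ++ G2), HPG. }
  destruct (partition (G1 ++ G2) [B] [R; Var p]) as (D & Rr & HP & HS).
  { intro m. specialize (Hb m). rewrite (occL_perm _ _ _ HPG) in Hb. simpl in *. lia. }
  assert (HG : Permutation (G1 ++ Imp B R :: G2) (Imp B R :: D ++ Rr))
    by (rewrite HPG, HP; reflexivity).
  apply (binary_seq_perm _ _ _ HG) in Hb. apply (valid_seq_perm _ _ _ HG) in Hv.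
  rewrite (sizeL_perm _ _ HG) in Hs. simpl in Hs. rewrite sizeL_app in Hs.
  apply CL7_L with (G := Rr) (D := D) (E := B) (F := R).
  - apply IH; [simpl; pose proof (size_pos B); lia| |].
    + intro m. specialize (Hb m). simpl in *. rewrite occL_app in Hb. lia.
    + exact (left_premise_valid _ _ _ _ _ HS Hv).
  - apply IH; [pose proof (size_pos R); lia| |].
    + intro m. specialize (Hb m). simpl in *. rewrite occL_app in Hb. lia.
    + exact (right_premise_valid _ _ _ _ _ Hh Hb HS Hv).
  - rewrite HG. apply perm_skip, Permutation_app_comm.
Qed.

Lemma CL7_subst s G H : CL7 G H -> CL7 (map (subst s) G) (subst s H).
Proof.
  induction 1 as [G G' F HP | G E F _ IH | G D S E F H _ IH1 _ IH2 HP].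
  - apply CL7_ax with (G := map (subst s) G). apply (Permutation_map (subst s)) in HP. exact HP.
  - apply CL7_R, IH.
  - apply CL7_L with (G := map (subst s) G) (D := map (subst s) D)
      (E := subst s E) (F := subst s F); [exact IH1|exact IH2|].
    apply (Permutation_map (subst s)) in HP. simpl in HP. rewrite map_app in HP. exact HP.
Qed.

Theorem theorem2p1 : forall H : form,
  provable H <->
  exists (F : form) (s : nat -> form), binary F /\ tautology F /\ subst s F = H.
Proof.
  intro H. split.
  - intro HP. destruct (soundness _ _ HP) as ([|A G0] & F & s & Hb & Hv & HG & HF);
      [|discriminate].
    exists F, s. split; [exact Hb|split; [intro v; apply Hv; intros A []|exact HF]].
  - intros (F & s & Hb & Ht & <-). apply (CL7_subst s [] F).
    apply (completeness_bounded (size F)); [simpl; lia|exact Hb|intros v _; apply Ht].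
Qed.
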